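(* Let $p$ be a prime, $n \in \mathbb{N}$, and let $\Gamma = \bigoplus_{i \in I} \mathcal{C}(p^\infty)$ be a direct sum of copies of $\mathcal{C}(p^\infty)$ (over some index set $I$), regarded as a discrete abelian group. For $E \subset \Gamma$ let $E_{p^n} := \{\gamma^{p^{n-1}} : \gamma \in E\}$, and let $E_{1/p^n} := \{\xi_\gamma : \gamma \in E\}$ where, for each $\gamma \in E$, $\xi_\gamma \in \Gamma$ is an element with $\xi_\gamma^{p^{n-1}} = \gamma$. If $E$ is $p^n$-PR, then $E_{p^n}$ is $p$-PR and $|E_{p^n}| = |E|$. If $E$ is $p$-PR, then $E_{1/p^n}$ is $p^n$-PR and $|E_{1/p^n}| = |E|$.
   Context: $\mathcal{C}(p^\infty)$ denotes the group of all $p^m$-th roots of unity, $m \ge 1$. Group operation written multiplicatively. For a discrete abelian group $\Delta$ with compact dual $\widehat{\Delta}$ and $N \in \mathbb{N}$, a subset $E \subset \Delta$ is $N$-PR if for every function $\varphi: E \to \mathbb{Z}_N$ (the $N$-th roots of unity in the unit circle) there exists $x \in \widehat{\Delta}$ with $\varphi(\gamma) = \gamma(x)$ for all $\gamma \in E$. *)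

From HB Require Import structures.
From mathcomp Require Import all_boot all_order all_algebra.
From mathcomp Require Export boolp classical_sets cardinality.

Import GRing.Theory Num.Theory.
Local Open Scope ring_scope.
Local Open Scope classical_set_scope.

(* Ambient complex field: any numeric algebraically closed field C
   (e.g. the complex numbers); the unit circle is [set z | `|z| = 1]. *)
Section Defs.
Variables (C : numClosedFieldType) (I : Type) (p : nat).

Definition prufer (z : C) : Prop := exists m : nat, (0 < m)%N /\ z ^+ (p ^ m) = 1.

(* Gamma = direct sum over I of copies of C(p^oo), as finitely supported
   families (value 1 off a finite set), with pointwise multiplication. *)
Definition Gamma : set (I -> C) :=
  [set f | (forall i, prufer (f i)) /\
           finite_set [set i | f i != 1]].

Definition gmul (f g : I -> C) : I -> C := fun i => f i * g i.
Definition gpow (f : I -> C) (k : nat) : I -> C := fun i => f i ^+ k.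

(* elements of the dual group: homomorphisms Gamma -> unit circle
   (Gamma is discrete, so all homomorphisms are continuous). *)
Definition character (chi : (I -> C) -> C) : Prop :=
  (forall f, Gamma f -> `|chi f| = 1) /\
  (forall f g, Gamma f -> Gamma g -> chi (gmul f g) = chi f * chi g).

Definition PR (N : nat) (E : set (I -> C)) : Prop :=
  forall phi : (I -> C) -> C, (forall g, E g -> phi g ^+ N = 1) ->
    exists chi, character chi /\ (forall g, E g -> phi g = chi g).

Definition E_pow (n : nat) (E : set (I -> C)) : set (I -> C) :=
  [set gpow g (p ^ (n.-1)) | g in E].
End Defs.

From Pilot Require Import Defs.
From HB Require Import structures.
From mathcomp Require Import all_boot all_order all_algebra.
From mathcomp Require Import boolp classical_sets cardinality.
Import Order.TTheory GRing.Theory Num.Theory.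
Local Open Scope ring_scope.
Local Open Scope classical_set_scope.
Local Open Scope card_scope.

Set Implicit Arguments.
Unset Strict Implicit.

(* Going down: a character realising the p^(n-1)-th roots of prescribed p-th
   roots of unity on E realises the latter on E_{p^n}.  Going up: the values
   of a character on a family y are determined by its values on y^d only up
   to d-th roots of unity, and these can be corrected by the d-th power of a
   second character; so y is (d M)-PR as soon as y^d is M-PR and d | M.
   Iterating from xi^(p^(n-1)) = id on E gives the second part.  The map
   x |-> x^(p^(n-1)) is injective on a p^n-PR set, since a character can take
   the value 1 at one point and a p^n-th root of unity z with
   z^(p^(n-1)) != 1 at another; xi is injective on E as it has a left
   inverse there. *)

Lemma exists_root1_exp_neq1 (C : numClosedFieldType) (d m : nat) :
  (1 < d)%N -> (0 < m)%N -> exists z : C, z ^+ (m * d) = 1 /\ z ^+ m != 1.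
Proof.
(* w^2 is a d-th root of unity; w is neither 1 nor the negative real -1. *)
move=> d_gt1 m_gt0; set w : C := d.-root (-1).
have d_gt0 : (0 < d)%N by apply: ltnW.
have w_d : w ^+ d = -1 by rewrite rootCK.
exists (m.-root (w ^+ 2)); rewrite exprM rootCK //; split.
  by rewrite -exprM mulnC exprM w_d sqrrN expr1n.
rewrite sqrf_eq1; apply/norP; split; apply/eqP => w_pm1.
  move: w_d; rewrite w_pm1 expr1n => /eqP.
  by rewrite gt_eqF // (lt_trans (ltrN10 C) ltr01).
by have := rootC_lt0 (-1 : C) d_gt1; rewrite -/w w_pm1 ltrN10.
Qed.

Section PRFamilies.
Variables (C : numClosedFieldType) (I : Type) (p : nat).
Local Notation Gamma := (Gamma C I p).
Local Notation character := (character C I p).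
Local Notation gpow := (gpow C I).
Local Notation gmul := (gmul C I).

Lemma Gamma1 : Gamma (fun _ => 1).
Proof.
split; first by move=> i; exists 1%N; rewrite expr1n.
by apply: (sub_finite_set _ (finite_set0 I)) => i /=; rewrite eqxx.
Qed.

Lemma Gamma_gpow f k : Gamma f -> Gamma (gpow f k).
Proof.
case=> f_prufer f_fin; split=> [i|].
  have [m [m_gt0 fm]] := f_prufer i; exists m; split => //.
  by rewrite /Defs.gpow -exprM mulnC exprM fm expr1n.
apply: (sub_finite_set _ f_fin) => i /=; apply: contraNN => /eqP fi1.
by rewrite /Defs.gpow fi1 expr1n.
Qed.

Lemma gpowM f a b : gpow (gpow f a) b = gpow f (a * b).
Proof. by apply: funext => i; rewrite /Defs.gpow exprM. Qed.

Lemma character_neq0 chi f : character chi -> Gamma f -> chi f != 0.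
Proof.
case=> chi_norm _ Gf; apply/eqP => chi_f0.
by have /eqP := chi_norm f Gf; rewrite chi_f0 normr0 eq_sym oner_eq0.
Qed.

Lemma character1 chi : character chi -> chi (fun _ => 1) = 1.
Proof.
move=> chi_char; have := chi_char.2 _ _ Gamma1 Gamma1.
have -> : gmul (fun _ => 1) (fun _ => 1) = (fun _ => 1).
  by apply: funext => i; rewrite /Defs.gmul mulr1.
move=> chi1_sq; apply: (mulIf (character_neq0 chi_char Gamma1)).
by rewrite mul1r -chi1_sq.
Qed.

Lemma character_gpow chi f k :
  character chi -> Gamma f -> chi (gpow f k) = chi f ^+ k.
Proof.
move=> chi_char Gf; elim: k => [|k IHk].
  have -> : gpow f 0 = (fun _ => 1) by apply: funext => i; rewrite /Defs.gpow.
  exact: character1.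
have -> : gpow f k.+1 = gmul f (gpow f k).
  by apply: funext => i; rewrite /Defs.gpow /Defs.gmul exprS.
by rewrite chi_char.2 ?IHk ?exprS //; apply: Gamma_gpow.
Qed.

Lemma character_mul chi1 chi2 :
  character chi1 -> character chi2 -> character (fun f => chi1 f * chi2 f).
Proof.
move=> [norm1 mul1] [norm2 mul2]; split=> [f Gf|f g Gf Gg].
  by rewrite normrM norm1 // norm2 // mulr1.
by rewrite mul1 // mul2 // mulrACA.
Qed.

Lemma character_exp chi k : character chi -> character (fun f => chi f ^+ k).
Proof.
move=> [chi_norm chi_mul]; split=> [f Gf|f g Gf Gg].
  by rewrite normrX chi_norm // expr1n.
by rewrite chi_mul // exprMn.
Qed.

(* Unlike PR, this allows repetitions in the family e, so that the powers
   x |-> e x ^ d of a PR family can again be compared with it. *)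
Definition PR_fam (N : nat) (T : Type) (F : set T) (e : T -> I -> C) : Prop :=
  forall t : T -> C, (forall x, F x -> t x ^+ N = 1) ->
  exists2 chi, character chi & forall x, F x -> chi (e x) = t x.

Lemma PR_fam_of_PR N E e :
  PR C I p N E -> (forall x, E x -> e x = x) -> PR_fam N E e.
Proof.
move=> PR_E e_id t /PR_E [chi [chi_char chi_t]].
by exists chi => // x Ex; rewrite e_id // chi_t.
Qed.

Lemma PR_fam_image N T (F : set T) e : PR_fam N F e -> PR C I p N (e @` F).
Proof.
move=> PR_e phi phi_N.
have /PR_e[chi chi_char chi_phi] : forall x, F x -> phi (e x) ^+ N = 1.
  by move=> x Fx; apply: phi_N; exists x.
by exists chi; split => // _ [x Fx <-]; rewrite chi_phi.
Qed.

Lemma PR_fam_gpow m N T (F : set T) e : (0 < m)%N ->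
  (forall x, F x -> Gamma (e x)) ->
  PR_fam (m * N) F e -> PR_fam N F (fun x => gpow (e x) m).
Proof.
move=> m_gt0 Ge PR_e t t_N.
have /PR_e[chi chi_char chi_e] : forall x, F x -> m.-root (t x) ^+ (m * N) = 1.
  by move=> x Fx; rewrite exprM rootCK // t_N.
exists chi => // x Fx.
by rewrite (character_gpow _ chi_char (Ge x Fx)) chi_e // rootCK.
Qed.

Lemma PR_fam_gpow_inj N m (z : C) T (F : set T) e :
  z ^+ N = 1 -> z ^+ m != 1 -> (forall x, F x -> Gamma (e x)) ->
  PR_fam N F e -> {in F &, injective (fun x => gpow (e x) m)}.
Proof.
move=> zN zm Ge PR_e x y; rewrite !inE => Fx Fy exy_m.
apply: contrapT => neq_xy; pose t u : C := if `[< u = y >] then z else 1.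
have /PR_e[chi chi_char chi_t] : forall u, F u -> t u ^+ N = 1.
  by move=> u _; rewrite /t; case: ifP; rewrite ?zN ?expr1n.
have := congr1 chi exy_m.
rewrite (character_gpow _ chi_char (Ge x Fx)).
rewrite (character_gpow _ chi_char (Ge y Fy)).
rewrite !chi_t // /t (asboolF neq_xy) (asboolT (erefl y)) expr1n => /esym/eqP.
by rewrite (negbTE zm).
Qed.

(* The second character corrects the first by the d-th roots of unity
   t / chi1 (y x), which it can realise since they are M-th roots. *)
Lemma PR_fam_lift d M T (F : set T) y : (d %| M)%N ->
  (forall x, F x -> Gamma (y x)) ->
  PR_fam M F (fun x => gpow (y x) d) -> PR_fam (d * M) F y.
Proof.
move=> dvd_dM Gy PR_yd t t_dM.
have /PR_yd[chi1 chi1_char chi1_t] : forall x, F x -> (t x ^+ d) ^+ M = 1.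
  by move=> x Fx; rewrite -exprM t_dM.
have chi1_y x : F x -> chi1 (y x) ^+ d = t x ^+ d.
  by move=> Fx; rewrite -(character_gpow _ chi1_char (Gy x Fx)) chi1_t.
pose r x := t x / chi1 (y x).
have r_d x : F x -> r x ^+ d = 1.
  move=> Fx; rewrite expr_div_n -chi1_y // divff //.
  by rewrite expf_neq0 // (character_neq0 chi1_char (Gy x Fx)).
have /PR_yd[chi0 chi0_char chi0_r] : forall x, F x -> r x ^+ M = 1.
  by move=> x Fx; case/dvdnP: dvd_dM => k ->; rewrite mulnC exprM r_d // expr1n.
exists (fun f => chi1 f * chi0 f ^+ d); first exact/character_mul/character_exp.
move=> x Fx /=; rewrite -(character_gpow _ chi0_char (Gy x Fx)) chi0_r //.
by rewrite mulrC divfK // (character_neq0 chi1_char (Gy x Fx)).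
Qed.

Lemma PR_fam_lift_iter d k T (F : set T) y : (forall x, F x -> Gamma (y x)) ->
  PR_fam d F (fun x => gpow (y x) (d ^ k)) -> PR_fam (d ^ k.+1) F y.
Proof.
elim: k y => [|k IHk] y Gy PR_y.
  have y1 : (fun x => gpow (y x) (d ^ 0)) = y.
    by apply: funext => x; apply: funext => i; rewrite /Defs.gpow expr1.
  by rewrite expn1 -y1.
rewrite expnS; apply: PR_fam_lift => //; first by rewrite expnS dvdn_mulr.
apply: IHk => [x Fx|]; first exact/Gamma_gpow/Gy.
have -> : (fun x => gpow (gpow (y x) d) (d ^ k)) =
          (fun x => gpow (y x) (d ^ k.+1)).
  by apply: funext => x; rewrite gpowM -expnS.
exact: PR_y.
Qed.
End PRFamilies.

Theorem corollary3p3 (C : numClosedFieldType) (I : Type) (p n : nat)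
  (E : set (I -> C)) :
  prime p -> (1 <= n)%N -> E `<=` Gamma C I p ->
  (PR C I p (p ^ n) E ->
     PR C I p p (E_pow C I p n E) /\ (E_pow C I p n E #= E)) /\
  (forall xi : (I -> C) -> (I -> C),
     (forall g, E g -> Gamma C I p (xi g) /\ gpow C I (xi g) (p ^ n.-1) = g) ->
     PR C I p p E ->
     PR C I p (p ^ n) (xi @` E) /\ (xi @` E #= E)).
Proof.
move=> p_prime n_gt0 E_Gamma.
have pn_gt0 : (0 < p ^ n.-1)%N by rewrite expn_gt0 prime_gt0.
have pnS : (p ^ n = p ^ n.-1 * p)%N by rewrite -expnSr prednK.
split=> [PR_E | xi xi_root PR_E].
  have PR_E_id : PR_fam p (p ^ n.-1 * p) E id.
    by rewrite -pnS; apply: PR_fam_of_PR.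
  split; first exact/PR_fam_image/PR_fam_gpow.
  have [z [z_pn z_pn1]] := exists_root1_exp_neq1 C (prime_gt1 p_prime) pn_gt0.
  exact/inj_card_eq/(PR_fam_gpow_inj z_pn z_pn1 E_Gamma).
have Gxi g : E g -> Gamma C I p (xi g) by case/xi_root.
have PR_xi : PR_fam p (p ^ n) E xi.
  rewrite -(prednK n_gt0); apply: PR_fam_lift_iter => //.
  by apply: PR_fam_of_PR => // g /xi_root[].
split; first exact: PR_fam_image.
apply: inj_card_eq => g h; rewrite !inE => Eg Eh xi_gh.
by rewrite -(xi_root g Eg).2 -(xi_root h Eh).2 xi_gh.
Qed.
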